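(* For $n\ge 1$, let $N(n)$ be the number of words $u\in\{0,1\}^*$ that begin and end with $1$ (the word $u=1$ is allowed), contain exactly $n$ occurrences of $1$, and are such that the configuration $0u0$ can be reduced to a single peg. Then \[ N(n)=\begin{cases}1 & n=1,\\ 1 & n=2,\\ 2 & n=3,\\ n^2-7n+15 & n\ge 4,\ n \text{ even},\\ n^2-7n+16 & n\ge 5,\ n\text{ odd}.\end{cases} \]
   Context: One-dimensional Peg Solitaire: a configuration is a finite word $w=c_0c_1\cdots c_{n-1}\in\{0,1\}^*$, describing a row of $n$ consecutive sites, where $c_i=1$ means site $i$ holds a peg and $c_i=0$ means site $i$ is a hole. The board consists exactly of these sites (no sites outside the word may be used). A move (hop) takes three consecutive sites $i,i+1,i+2$ within the board such that one end site and the middle site hold pegs and the other end site is a hole, moves the end peg to the hole, and removes the middle peg (i.e. $110\to001$ or $011\to100$). A configuration can be reduced to a single peg if some sequence of hops leads to a configuration with exactly one peg. *)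

From Stdlib Require Import Relations.
From mathcomp Require Import all_boot all_order all_algebra.
Set Implicit Arguments. Unset Strict Implicit. Unset Printing Implicit Defensive.

(* Configurations: words over {0,1}, encoded as seq bool (true = peg = 1). *)

(* One hop inside the board: 110 -> 001 or 011 -> 100 on three consecutive
   sites of the word; the board is exactly the sites of the word. *)
Definition hop (w w' : seq bool) : Prop :=
  exists a b : seq bool,
    (w = a ++ [:: true; true; false] ++ b /\ w' = a ++ [:: false; false; true] ++ b)
    \/ (w = a ++ [:: false; true; true] ++ b /\ w' = a ++ [:: true; false; false] ++ b).

Definition reducible_to_one (w : seq bool) : Prop :=
  exists w', clos_refl_trans (seq bool) hop w w' /\ count id w' = 1%N.

Definition counted (n : nat) (u : seq bool) : Prop :=
  head false u = true /\ last false u = true /\ count id u = n /\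
  reducible_to_one (false :: u ++ [:: false]).

Definition N_value (n : nat) : int :=
  if n == 1%N then 1%R
  else if n == 2%N then 1%R
  else if n == 3%N then 2%R
  else if ~~ odd n then ((n%:Z) ^+ 2 - 7 * n%:Z + 15)%R
  else ((n%:Z) ^+ 2 - 7 * n%:Z + 16)%R.

(* The words reducible to a single peg form a regular language, and [delta]
   below is an 18-state DFA for it.  Soundness: one-peg words are accepted and
   the accepted language is closed under inverse hops, because a simulation
   between DFA states relates the state reached after the right-hand side of a
   hop to the one reached after its left-hand side.  Completeness: every
   accepted word with at least two pegs has a hop leading to an accepted word;
   this is verified on the finite reachable part of the DFA run in parallel
   with a nondeterministic automaton guessing where the hop takes place.
   Counting: an accepted word 0u0 never contains 000 inside u, so u is 1
   followed by blocks 1, 01, 001 of one peg each; the numbers of block words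
   leading the DFA to acceptance satisfy a linear recurrence whose solution is
   quadratic in the number of blocks, with a parity-dependent constant. *)
From Stdlib Require Import Relations.
From mathcomp Require Import all_boot all_order all_algebra zify.
Set Implicit Arguments. Unset Strict Implicit. Unset Printing Implicit Defensive.

(* State 0 is initial; state 12 is dead, and [delta] also sends every
   out-of-range state there. *)
Definition delta0 := [:: 1; 1; 3; 6; 3; 4; 6; 10; 4; 11; 12; 12; 12; 7; 10; 12; 11; 14].
Definition delta1 := [:: 2; 4; 5; 7; 8; 9; 12; 3; 9; 13; 14; 15; 12; 16; 6; 10; 17; 16].
Definition delta (q : nat) (c : bool) : nat := nth 12 (if c then delta1 else delta0) q.
Definition accepting (q : nat) : bool := q \in [:: 2; 3; 4; 6; 8].
Definition run (q : nat) (w : seq bool) : nat := foldl delta q w.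
Definition accepted (w : seq bool) : bool := accepting (run 0 w).

Lemma delta_dead q c : 18 <= q -> delta q c = 12.
Proof. by move=> hq; rewrite /delta nth_default //; case: c. Qed.

Lemma run_cat q a b : run q (a ++ b) = run (run q a) b.
Proof. exact: foldl_cat. Qed.

Lemma run_rcons q w c : run q (rcons w c) = delta (run q w) c.
Proof. exact: foldl_rcons. Qed.

Lemma run_zeros_in (A : seq nat) q w :
  all (fun p => delta p false \in A) A -> q \in A -> count id w = 0 ->
  run q w \in A.
Proof.
move=> /allP hA; elim: w q => [|[] w IH] q //= hq hw.
by apply: IH hw; apply: hA.
Qed.

Lemma not_accepted_no_peg w : count id w = 0 -> ~~ accepted w.
Proof.
move=> hw; have := @run_zeros_in [:: 0; 1] 0 w erefl erefl hw.
by rewrite /accepted !inE => /orP[] /eqP ->.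
Qed.

Lemma accepted_single_peg w : count id w = 1 -> accepted w.
Proof.
suff: forall q, q \in [:: 0; 1] -> count id w = 1 -> accepting (run q w) by apply.
elim: w => [|[] w IH] q //= hq hw.
  have : run (delta q true) w \in [:: 2; 3; 4; 6].
    by apply: run_zeros_in; [|move: hq; rewrite !inE => /orP[] /eqP ->|lia].
  by rewrite !inE => /or4P[] /eqP ->.
by apply: IH hw; move: hq; rewrite !inE => /orP[] /eqP ->.
Qed.

Definition simulation : seq (nat * nat) :=
  [:: (0,0); (0,1); (1,1); (2,2); (2,4); (3,3); (4,4); (5,5); (5,8); (6,2);
      (6,3); (6,4); (6,6); (6,8); (7,7); (8,8); (9,9); (10,1); (10,3);
      (10,10); (11,3); (11,11); (12,0); (12,1); (12,2); (12,3); (12,4);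
      (12,5); (12,6); (12,7); (12,8); (12,9); (12,10); (12,11); (12,12);
      (12,13); (12,14); (12,15); (12,16); (12,17); (13,13); (14,0); (14,1);
      (14,4); (14,7); (14,14); (15,7); (15,15); (16,2); (16,4); (16,9);
      (16,16); (17,0); (17,1); (17,5); (17,8); (17,13); (17,17)].

Definition simulated (p q : nat) : bool := (p, q) \in simulation.

Lemma simulationP : all (fun pq =>
  [&& accepting pq.1 ==> accepting pq.2,
      simulated (delta pq.1 false) (delta pq.2 false)
    & simulated (delta pq.1 true) (delta pq.2 true)]) simulation.
Proof. by vm_compute. Qed.

Lemma simulated_run p q w :
  simulated p q -> accepting (run p w) -> accepting (run q w).
Proof.
have /allP hsim := simulationP.
elim: w p q => [|c w IH] p q /hsim /and3P[hacc h0 h1] /=; first exact/implyP.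
by apply: IH; case: c.
Qed.

Lemma simulated_hop q :
  simulated (run q [:: false; false; true]) (run q [:: true; true; false]) &&
  simulated (run q [:: true; false; false]) (run q [:: false; true; true]).
Proof.
have [hq|hq] := ltnP q 18; last by rewrite /run /= (delta_dead false hq) (delta_dead true hq).
have : all (fun q =>
  simulated (run q [:: false; false; true]) (run q [:: true; true; false]) &&
  simulated (run q [:: true; false; false]) (run q [:: false; true; true]))
    (iota 0 18) by vm_compute.
by move/allP; apply; rewrite mem_iota.
Qed.

Lemma accepted_hop_inv w w' : hop w w' -> accepted w' -> accepted w.
Proof.
case=> a [b [[-> ->]|[-> ->]]]; rewrite /accepted !run_cat; apply: simulated_run;
  by case/andP: (simulated_hop (run 0 a)).
Qed.

Lemma reducible_accepted w : reducible_to_one w -> accepted w.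
Proof.
case=> w' [hr /accepted_single_peg].
by elim: hr => [x y /accepted_hop_inv | | x y z _ IHxy _ IHyz /IHyz /IHxy].
Qed.

Definition hop_lhs (k : bool) := if k then [:: false; true; true] else [:: true; true; false].
Definition hop_rhs (k : bool) := if k then [:: true; false; false] else [:: false; false; true].

(* A guess [(t, q)] about a word [x] read so far: for [t = 0] a hop has been
   placed inside [x] and [q] is the DFA state after the hopped word; for
   [t = 1, 2] (resp. [t = 3, 4]) [x] ends with the first one or two letters of
   a hop [110 -> 001] (resp. [011 -> 100]) and [q] is the state after the
   corresponding letters of the right-hand side. *)
Definition guess := (nat * nat)%type.

Definition guess_sound (x : seq bool) (g : guess) : Prop :=
  let: (t, q) := g in
  match t with
  | 0 => exists a b k, x = a ++ hop_lhs k ++ b /\ run 0 (a ++ hop_rhs k ++ b) = q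
  | 1 => exists a, x = rcons a true /\ run 0 (rcons a false) = q
  | 2 => exists a, x = a ++ [:: true; true] /\ run 0 (a ++ [:: false; false]) = q
  | 3 => exists a, x = rcons a false /\ run 0 (rcons a true) = q
  | 4 => exists a, x = a ++ [:: false; true] /\ run 0 (a ++ [:: true; false]) = q
  | _ => False
  end.

Definition guess_step (g : guess) (c : bool) : seq guess :=
  let: (t, q) := g in
  match t with
  | 0 => [:: (0, delta q c)]
  | 1 => if c then [:: (2, delta q false)] else [::]
  | 2 => if c then [::] else [:: (0, delta q true)]
  | 3 => if c then [:: (4, delta q false)] else [::]
  | 4 => if c then [:: (0, delta q false)] else [::]
  | _ => [::]
  end.

Definition guess_start (q : nat) (c : bool) : seq guess :=
  if c then [:: (1, delta q false)] else [:: (3, delta q true)].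

Lemma guess_step_sound x g c g' :
  guess_sound x g -> g' \in guess_step g c -> guess_sound (rcons x c) g'.
Proof.
case: g => [[|[|[|[|[|t]]]]] q] //=.
- case=> a [b [k [-> <-]]]; rewrite inE => /eqP ->.
  by exists a, (rcons b c), k; rewrite -!rcons_cat run_rcons.
- case=> a [-> <-]; case: c => //; rewrite inE => /eqP ->.
  by exists a; rewrite -!cats1 -!catA !run_cat.
- case=> a [-> <-]; case: c => //; rewrite inE => /eqP ->.
  by exists a, [::], false; rewrite cats0 -!cats1 -!catA !run_cat.
- case=> a [-> <-]; case: c => //; rewrite inE => /eqP ->.
  by exists a; rewrite -!cats1 -!catA !run_cat.
- case=> a [-> <-]; case: c => //; rewrite inE => /eqP ->.
  by exists a, [::], true; rewrite cats0 -!cats1 -!catA !run_cat.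
Qed.

Lemma guess_start_sound x c g :
  g \in guess_start (run 0 x) c -> guess_sound (rcons x c) g.
Proof. by case: c; rewrite inE => /eqP -> /=; exists x; rewrite run_rcons. Qed.

(* Sets of guesses are kept as sublists of [all_guesses], so that equal sets
   are equal lists. *)
Definition all_guesses : seq guess := [seq (t, q) | t <- iota 0 5, q <- iota 0 18].

Definition normalize (gs : seq guess) : seq guess := [seq g <- all_guesses | g \in gs].

(* The DFA state, the number of pegs read (capped at 2) and the set of
   guesses. *)
Definition tracker := (nat * nat * seq guess)%type.

Definition tracker_init : tracker := (0, 0, [::]).

Definition tracker_step (d : tracker) (c : bool) : tracker :=
  let: (q, n, gs) := d in
  (delta q c, minn 2 (n + c),
   normalize (guess_start q c ++ flatten [seq guess_step g c | g <- gs])).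

Fixpoint explore (fuel : nat) (seen todo : seq tracker) : seq tracker :=
  if fuel is fuel'.+1 then
    if todo is d :: todo' then
      let fresh := [seq e <- [:: tracker_step d false; tracker_step d true] | e \notin seen] in
      explore fuel' (fresh ++ seen) (fresh ++ todo')
    else seen
  else seen.

(* Only the closure properties of this list are verified below, not how it
   was computed. *)
Definition trackers : seq tracker :=
  Eval vm_compute in explore 1000 [:: tracker_init] [:: tracker_init].

Lemma trackers_closed : (tracker_init \in trackers) &&
  all (fun d => (tracker_step d false \in trackers) && (tracker_step d true \in trackers))
    trackers.
Proof. by vm_compute. Qed.

Lemma trackers_hop : all (fun d : tracker => let: (q, n, gs) := d in
  accepting q && (n == 2) ==> has (fun g => (g.1 == 0) && accepting g.2) gs) trackers.
Proof. by vm_compute. Qed.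

Lemma tracker_run x : exists2 gs,
  foldl tracker_step tracker_init x = (run 0 x, minn 2 (count id x), gs) &
  forall g, g \in gs -> guess_sound x g.
Proof.
elim/last_ind: x => [|x c [gs hx hgs]]; first by exists [::].
rewrite foldl_rcons hx /=; eexists.
  by rewrite run_rcons -cats1 count_cat /= addn0; congr (_, _, _); case: c => /=; lia.
move=> g; rewrite mem_filter => /andP[+ _]; rewrite mem_cat => /orP[].
  exact: guess_start_sound.
by case/flattenP=> s /mapP[g' hg' ->]; apply: guess_step_sound (hgs _ hg').
Qed.

Lemma tracker_run_reachable x : foldl tracker_step tracker_init x \in trackers.
Proof.
case/andP: trackers_closed => hinit /allP hstep.
elim/last_ind: x => [|x c IH] //; rewrite foldl_rcons.
by case/andP: (hstep _ IH); case: c.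
Qed.

Lemma accepted_hop w : accepted w -> 2 <= count id w ->
  exists w', [/\ hop w w', accepted w' & count id w' = (count id w).-1].
Proof.
move=> hw h2; have [gs hx hgs] := tracker_run w.
have := allP trackers_hop _ (tracker_run_reachable w); rewrite hx -/(accepted w) hw.
rewrite (_ : minn 2 (count id w) = 2) ?eqxx; last exact/minn_idPl.
case/hasP=> [[t q] hg /andP[/eqP /= ht hq]]; subst t.
have [a [b [k [ew erun]]]] := hgs _ hg.
exists (a ++ hop_rhs k ++ b); split.
- by exists a, b; case: k ew {erun} => ew; [right | left].
- by rewrite /accepted erun.
- by rewrite ew !count_cat; case: k {ew erun} => /=; lia.
Qed.

Lemma accepted_reducible w : accepted w -> reducible_to_one w.
Proof.
move hm: (count id w) => m; elim: m w hm => [|[|m] IH] w hm hw.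
- by rewrite (negbTE (not_accepted_no_peg hm)) in hw.
- by exists w; split; first exact: rt_refl.
have [|w' [hww' hw' hm']] := accepted_hop hw; first by rewrite hm.
have [|w'' [hr hw'']] := IH w' _ hw'; first by rewrite hm' hm.
by exists w''; split => //; apply: (rt_trans _ _ _ w'); first exact: rt_step.
Qed.

Lemma reducible_to_oneP w : reducible_to_one w <-> accepted w.
Proof. by split; [apply: reducible_accepted | apply: accepted_reducible]. Qed.

Fixpoint block_words (q m : nat) : seq (seq bool) :=
  if m is m'.+1 then
    [seq true :: v | v <- block_words (delta q true) m']
    ++ [seq [:: false, true & v] | v <- block_words (delta (delta q false) true) m']
    ++ [seq [:: false, false, true & v]
          | v <- block_words (delta (delta (delta q false) false) true) m']
  else if accepting (delta q false) then [:: [::]] else [::].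

Fixpoint nblock_words (q m : nat) : nat :=
  if m is m'.+1 then
    nblock_words (delta q true) m' + nblock_words (delta (delta q false) true) m'
    + nblock_words (delta (delta (delta q false) false) true) m'
  else accepting (delta q false).

Lemma size_block_words q m : size (block_words q m) = nblock_words q m.
Proof.
elim: m q => [|m IH] q /=; first by case: ifP.
by rewrite !size_cat !size_map !IH addnA.
Qed.

Lemma block_words_uniq q m : uniq (block_words q m).
Proof.
elim: m q => [|m IH] q /=; first by case: ifP.
rewrite !cat_uniq !map_inj_uniq ?IH //=; try by move=> x y [].
rewrite has_cat !negb_or andbT; repeat (apply/andP; split);
  by apply/hasPn => x /mapP[y _ ->]; apply/mapP => [[z _]].
Qed.

Lemma block_words_sound q m v : v \in block_words q m ->
  [/\ count id v = m, last true v & accepting (delta (run q v) false)].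
Proof.
elim: m q v => [|m IH] q v /=; first by case: ifP => // hq; rewrite inE => /eqP ->.
by rewrite !mem_cat => /or3P[] /mapP[v' /IH[<- hl ha] ->].
Qed.

(* The states reachable from 4 = run 0 [:: false; true] by reading blocks. *)
Definition block_states := [:: 3; 4; 6; 7; 8; 9; 10; 12; 13; 14; 15; 16; 17].

(* Reading 000 from a block state leads to 6 or 12, from which reading a peg
   and then a hole can never be accepted. *)
Lemma block_statesP : all (fun q => [&& delta q true \in block_states,
   delta (delta q false) true \in block_states,
   delta (delta (delta q false) false) true \in block_states &
   delta (delta (delta q false) false) false \in [:: 6; 12]]) block_states.
Proof. by vm_compute. Qed.

Lemma run_trap z w : z \in [:: 6; 12] -> run z w \in [:: 6; 12].
Proof.
elim: w z => [|c w IH] z //= hz; apply: IH.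
by move: hz; rewrite !inE => /orP[] /eqP ->; case: c.
Qed.

Lemma block_words_complete m q v : q \in block_states ->
  count id v = m -> last true v -> accepting (delta (run q v) false) ->
  v \in block_words q m.
Proof.
elim: m q v => [|m IH] q v hq.
  case/lastP: v => [|v x] /=; first by move=> _ _ ->.
  by rewrite last_rcons -cats1 count_cat /= => + hx; rewrite hx; lia.
have /and4P[h1 h01 h001 h000] := allP block_statesP q hq.
case: v => [|[] v] //= => [[hv] hl ha|].
  by rewrite mem_cat map_f ?IH.
case: v => [|[] v] //= => [hv hl ha|].
  by rewrite !mem_cat map_f ?orbT ?IH //; case: hv.
case: v => [|[] v] //= => [hv hl ha|].
  by rewrite !mem_cat map_f ?orbT ?IH //; case: hv.
move=> _; case/lastP: v => [|v x] //=; rewrite last_rcons => -> ha.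
have := run_trap v h000; rewrite run_rcons in ha.
by rewrite !inE => /orP[] /eqP h; rewrite h in ha.
Qed.

Definition counted_words (n : nat) : seq (seq bool) :=
  [seq true :: v | v <- block_words 4 n.-1].

Lemma counted_words_uniq n : uniq (counted_words n).
Proof. by rewrite map_inj_uniq ?block_words_uniq // => x y []. Qed.

Lemma mem_counted_words n u : 1 <= n -> u \in counted_words n <-> counted n u.
Proof.
move=> hn; split.
  case/mapP=> v /block_words_sound[hv hl ha] ->.
  do 2!split=> //; split; first by rewrite /= hv; lia.
  by apply/reducible_to_oneP; rewrite /accepted /= run_cat.
case: u => [|[] v] [] //= _ [hl [hv /reducible_to_oneP]].
rewrite /accepted /= run_cat => ha.
by apply: map_f; apply: block_words_complete; rewrite // -hv.
Qed.

Definition nblock_words_even (q k : nat) : nat :=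
  match q with
  | 3 | 7 => k + 2
  | 4 => 4 * k * k + 6 * k + 6
  | 8 => 4 * k * k + 9 * k + 7
  | 9 => 3 * k + 4
  | 10 | 14 | 15 => 1
  | 13 => 3 * k + 3
  | 16 => 2 * k + 3
  | 17 => 2 * k + 2
  | _ => 0
  end.

Lemma nblock_wordsE q k : q \in block_states ->
  nblock_words q (2 * k + 4) = nblock_words_even q k.
Proof.
elim: k q => [|k IH] q.
  have /allP base : all (fun q => nblock_words q 4 == nblock_words_even q 0) block_states
    by vm_compute.
  by move/base/eqP.
(* The counts depend on the parity of the number of blocks, so the recurrence
   is unfolded twice. *)
have -> : 2 * k.+1 + 4 = (2 * k + 4).+2 by lia.
do ![rewrite inE => /predU1P[-> | ]]; last rewrite inE => /eqP ->.
all: by cbn -[addn muln]; rewrite !IH //=; nia.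
Qed.

Lemma size_counted_words n : 1 <= n -> Posz (size (counted_words n)) = N_value n.
Proof.
rewrite size_map size_block_words.
case: n => [|[|[|[|[|n]]]]] // _; try by vm_compute.
have [k [-> | ->]] : exists k, n = 2 * k \/ n = 2 * k + 1 by exists (n %/ 2); lia.
  have -> : (2 * k).+1.+4.-1 = 2 * k + 4 by lia.
  by rewrite nblock_wordsE // /N_value /= oddM /=; lia.
have -> : (2 * k + 1).+1.+4.-1 = (2 * k + 4).+1 by lia.
by rewrite /= !nblock_wordsE // /N_value /= oddD oddM /=; lia.
Qed.

Theorem mainTheorem2 (n : nat) (hn : (1 <= n)%N) :
  exists s : seq (seq bool),
    uniq s /\ (forall u : seq bool, u \in s <-> counted n u) /\
    Posz (size s) = N_value n.
Proof.
exists (counted_words n); split; first exact: counted_words_uniq.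
by split=> [u|]; [apply: mem_counted_words | apply: size_counted_words].
Qed.
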